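(* Let $X$ be a finite connected poset. Then $\mathcal{P}(X)\subseteq\mathcal{AM}(X)$.
   Context: For $x<y$ in $X$, $e_{xy}$ denotes the incidence-algebra basis element and $B=\{e_{xy}:x<y\}$. $\mathcal{C}(X)$ is the set of maximal chains. For a bijection $\theta:B\to B$ and $C:u_1<\dots<u_m$ in $\mathcal{C}(X)$, $\theta$ is increasing on $C$ if there is $D:v_1<\dots<v_m$ in $\mathcal{C}(X)$ with $\theta(e_{u_iu_j})=e_{v_iv_j}$ for all $i<j$, decreasing if $\theta(e_{u_iu_j})=e_{v_{m-j+1}v_{m-i+1}}$ for all $i<j$. $\mathcal{M}(X)$: bijections $B\to B$ increasing or decreasing on every maximal chain. A walk is a sequence $u_0,\dots,u_m$ where for each $i$ one of $u_i,u_{i+1}$ covers the other; closed if $u_0=u_m$. For a closed walk $\Gamma:u_0,\dots,u_m=u_0$ and $z\in X$: $s^+_{\theta,\Gamma}(z)=|\{i: u_i<u_{i+1},\ \exists w>z,\ \theta(e_{zw})=e_{u_iu_{i+1}}\}|$, $s^-_{\theta,\Gamma}(z)=|\{i: u_i>u_{i+1},\ \exists w>z,\ \theta(e_{zw})=e_{u_{i+1}u_i}\}|$, $t^+_{\theta,\Gamma}(z)=|\{i: u_i<u_{i+1},\ \exists w<z,\ \theta(e_{wz})=e_{u_iu_{i+1}}\}|$, $t^-_{\theta,\Gamma}(z)=|\{i: u_i>u_{i+1},\ \exists w<z,\ \theta(e_{wz})=e_{u_{i+1}u_i}\}|$, $0\le i\le m-1$. $\theta$ is admissible if $s^+-s^-=t^+-t^-$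 at every $z$ for every closed walk; $\mathcal{AM}(X)$ is the set of admissible elements of $\mathcal{M}(X)$. $\theta:B\to B$ is proper if there is an automorphism $\lambda$ of $X$ with $\theta(e_{xy})=e_{\lambda(x)\lambda(y)}$ for all $x<y$, or an anti-automorphism $\lambda$ with $\theta(e_{xy})=e_{\lambda(y)\lambda(x)}$ for all $x<y$; $\mathcal{P}(X)$ is the set of proper bijections. *)

From HB Require Import structures.
From mathcomp Require Import all_boot all_order all_algebra.
Set Implicit Arguments. Unset Strict Implicit. Unset Printing Implicit Defensive.
Import Order.Theory.

Local Open Scope order_scope.

Section Incidence.
Context {d : Order.disp_t} (X : finPOrderType d).

(* B = { e_xy : x < y }, the element e_xy represented by the pair (x, y). *)
Definition B := {p : X * X | p.1 < p.2}.

Definition covers (x y : X) : bool := (x < y) && [forall z : X, ~~ ((x < z) && (z < y))].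

Definition adj (x y : X) : bool := covers x y || covers y x.

(* a walk u_0, u_1, ..., u_m is given by u_0 and the list [u_1; ...; u_m] *)
Definition walk (u0 : X) (s : seq X) : bool := path adj u0 s.

Definition closed_walk (u0 : X) (s : seq X) : bool := walk u0 s && (last u0 s == u0).

Definition connected_poset : Prop :=
  forall x y : X, exists s : seq X, walk x s && (last x s == y).

Definition chain (s : seq X) : bool := sorted (fun a b => a < b) s.

Definition maximal_chain (s : seq X) : Prop :=
  chain s /\ forall t : seq X, chain t -> {subset s <= t} -> {subset t <= s}.

(* theta(e_{u_i u_j}) = e_{v_i v_j} for all i < j (0-indexed) *)
Definition increasing_on (theta : B -> B) (C : seq X) : Prop :=
  exists D : seq X, maximal_chain D /\ size D = size C /\
    forall (i j : nat) (b : B), i < j < size C ->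
      val b = (nth (val b).1 C i, nth (val b).1 C j) ->
      val (theta b) = (nth (val b).1 D i, nth (val b).1 D j).

(* theta(e_{u_i u_j}) = e_{v_{m-j+1} v_{m-i+1}} (1-indexed), i.e.
   e_{v_{m-1-j} v_{m-1-i}} (0-indexed) *)
Definition decreasing_on (theta : B -> B) (C : seq X) : Prop :=
  exists D : seq X, maximal_chain D /\ size D = size C /\
    forall (i j : nat) (b : B), i < j < size C ->
      val b = (nth (val b).1 C i, nth (val b).1 C j) ->
      val (theta b) = (nth (val b).1 D (size C - 1 - j),
                       nth (val b).1 D (size C - 1 - i)).

Definition in_M (theta : B -> B) : Prop :=
  bijective theta /\
  forall C : seq X, maximal_chain C -> increasing_on theta C \/ decreasing_on theta C.

Definition step_up (u0 : X) (s : seq X) (i : nat) : bool :=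
  nth u0 (u0 :: s) i < nth u0 (u0 :: s) i.+1.
Definition step_down (u0 : X) (s : seq X) (i : nat) : bool :=
  nth u0 (u0 :: s) i > nth u0 (u0 :: s) i.+1.

Definition s_plus (theta : B -> B) (u0 : X) (s : seq X) (z : X) : nat :=
  count (fun i => step_up u0 s i &&
     [exists b : B, ((val b).1 == z) &&
        (val (theta b) == (nth u0 (u0 :: s) i, nth u0 (u0 :: s) i.+1))])
    (iota 0 (size s)).
Definition s_minus (theta : B -> B) (u0 : X) (s : seq X) (z : X) : nat :=
  count (fun i => step_down u0 s i &&
     [exists b : B, ((val b).1 == z) &&
        (val (theta b) == (nth u0 (u0 :: s) i.+1, nth u0 (u0 :: s) i))])
    (iota 0 (size s)).
Definition t_plus (theta : B -> B) (u0 : X) (s : seq X) (z : X) : nat :=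
  count (fun i => step_up u0 s i &&
     [exists b : B, ((val b).2 == z) &&
        (val (theta b) == (nth u0 (u0 :: s) i, nth u0 (u0 :: s) i.+1))])
    (iota 0 (size s)).
Definition t_minus (theta : B -> B) (u0 : X) (s : seq X) (z : X) : nat :=
  count (fun i => step_down u0 s i &&
     [exists b : B, ((val b).2 == z) &&
        (val (theta b) == (nth u0 (u0 :: s) i.+1, nth u0 (u0 :: s) i))])
    (iota 0 (size s)).

Definition admissible (theta : B -> B) : Prop :=
  forall (u0 : X) (s : seq X), closed_walk u0 s -> forall z : X,
    ((s_plus theta u0 s z)%:Z - (s_minus theta u0 s z)%:Z =
     (t_plus theta u0 s z)%:Z - (t_minus theta u0 s z)%:Z)%R.

Definition in_AM (theta : B -> B) : Prop := in_M theta /\ admissible theta.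

Definition automorphism (lam : X -> X) : Prop :=
  bijective lam /\ forall x y : X, (x <= y) = (lam x <= lam y).
Definition anti_automorphism (lam : X -> X) : Prop :=
  bijective lam /\ forall x y : X, (x <= y) = (lam y <= lam x).

Definition proper (theta : B -> B) : Prop :=
  (exists lam : X -> X, automorphism lam /\
     forall b : B, val (theta b) = (lam (val b).1, lam (val b).2)) \/
  (exists lam : X -> X, anti_automorphism lam /\
     forall b : B, val (theta b) = (lam (val b).2, lam (val b).1)).

Definition in_P (theta : B -> B) : Prop := bijective theta /\ proper theta.

End Incidence.

From mathcomp Require Import all_boot all_order all_algebra.
From mathcomp Require Import zify.
Import Order.Theory.

Set Implicit Arguments.
Unset Strict Implicit.
Unset Printing Implicit Defensive.

(* The (anti-)automorphism lam underlying a proper theta carries maximal chains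
   to maximal chains, increasingly (resp. decreasingly).  Along a closed walk,
   s^+, s^-, t^+, t^- at z count the up and down steps leaving or entering
   lam z, so the admissibility identity says that the walk leaves lam z as
   often as it enters it. *)

Local Open Scope order_scope.

Lemma count_andb_xor (T : eqType) (P P' Q : pred T) (l : seq T) :
  {in l, forall i, P i (+) P' i} ->
  count (fun i => P i && Q i) l + count (fun i => P' i && Q i) l = count Q l.
Proof.
elim: l => //= x l IHl PxorP'.
rewrite -IHl => [|i li]; last by apply: PxorP'; rewrite inE li orbT.
by case: (P x) (P' x) (Q x) (PxorP' x (mem_head _ _)) => [] [] [] //= _; lia.
Qed.

Lemma count_nth_closed (T : Type) (x : T) (s : seq T) (p : pred T) :
  last x s = x ->
  count (fun i => p (nth x (x :: s) i)) (iota 0 (size s)) =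
  count (fun i => p (nth x (x :: s) i.+1)) (iota 0 (size s)).
Proof.
move=> closed_s.
rewrite -[LHS](count_map _ p) -[RHS](count_map (nth x s) p).
rewrite !map_nth_iota0 //= take_size [X in take _ X]lastI -cats1.
rewrite take_size_cat ?size_belast //.
have := congr1 (count p) (lastI x s).
by rewrite -cats1 count_cat /= closed_s; lia.
Qed.

Section Walks.
Context {d : Order.disp_t} (X : finPOrderType d).
Implicit Types (a : X) (s : seq X).

Lemma adj_ltxor (x y : X) : adj x y -> (x < y) (+) (y < x).
Proof.
by case/orP=> /andP[lt_xy _]; move: (lt_asym x y); rewrite lt_xy /= ?andbT => ->.
Qed.

Lemma walk_step_xor (u0 : X) s i : walk u0 s -> i \in iota 0 (size s) ->
  step_up u0 s i (+) step_down u0 s i.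
Proof. by move=> /(pathP u0) walk_s; rewrite mem_iota => /walk_s/adj_ltxor. Qed.

Definition up_from (u0 : X) s a := count (fun i =>
  step_up u0 s i && (nth u0 (u0 :: s) i == a)) (iota 0 (size s)).
Definition up_to (u0 : X) s a := count (fun i =>
  step_up u0 s i && (nth u0 (u0 :: s) i.+1 == a)) (iota 0 (size s)).
Definition down_from (u0 : X) s a := count (fun i =>
  step_down u0 s i && (nth u0 (u0 :: s) i == a)) (iota 0 (size s)).
Definition down_to (u0 : X) s a := count (fun i =>
  step_down u0 s i && (nth u0 (u0 :: s) i.+1 == a)) (iota 0 (size s)).

Lemma closed_walk_balance (u0 : X) s a : closed_walk u0 s ->
  up_from u0 s a + down_from u0 s a = up_to u0 s a + down_to u0 s a.
Proof.
case/andP=> walk_s /eqP closed_s.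
rewrite /up_from /down_from /up_to /down_to !count_andb_xor;
  try by move=> i; apply: walk_step_xor.
exact: count_nth_closed (pred1 a) closed_s.
Qed.

End Walks.

Section Relabelling.
Context {d : Order.disp_t} (X : finPOrderType d).

Lemma existsB_relabel (theta : B X -> B X) (h h' : X * X -> X * X)
    (P : pred (X * X)) (pr : X * X) :
  cancel h h' -> cancel h' h -> (forall b, val (theta b) = h (val b)) ->
  (h' pr).1 < (h' pr).2 ->
  [exists b : B X, P (val b) && (val (theta b) == pr)] = P (h' pr).
Proof.
move=> hK h'K theta_h lt_pr; apply/existsP/idP => [[b /andP[Pb /eqP <-]] | Ppr].
  by rewrite theta_h hK.
by exists (exist _ (h' pr) lt_pr); rewrite /= theta_h h'K Ppr eqxx.
Qed.

Lemma chain_rev_map (f : X -> X) t : {mono f : x y /~ x < y} ->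
  chain (rev (map f t)) = chain t.
Proof. by move=> f_nmono; rewrite /chain rev_sorted; apply: mono_sorted => x y /=. Qed.

Variables (lam g : X -> X).
Hypotheses (lamK : cancel lam g) (gK : cancel g lam).

Let pairK : cancel (fun pr : X * X => (lam pr.1, lam pr.2))
                   (fun pr => (g pr.1, g pr.2)).
Proof. by case=> x y; rewrite /= !lamK. Qed.

Let pairKV : cancel (fun pr : X * X => (g pr.1, g pr.2))
                    (fun pr => (lam pr.1, lam pr.2)).
Proof. by case=> x y; rewrite /= !gK. Qed.

Let swapK : cancel (fun pr : X * X => (lam pr.2, lam pr.1))
                   (fun pr => (g pr.2, g pr.1)).
Proof. by case=> x y; rewrite /= !lamK. Qed.

Let swapKV : cancel (fun pr : X * X => (g pr.2, g pr.1))
                    (fun pr => (lam pr.2, lam pr.1)).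
Proof. by case=> x y; rewrite /= !gK. Qed.

Section Automorphism.
Hypothesis lam_mono : {mono lam : x y / x < y}.
Variable theta : B X -> B X.
Hypothesis theta_lam : forall b, val (theta b) = (lam (val b).1, lam (val b).2).

Let g_mono : {mono g : x y / x < y}.
Proof. by move=> x y; rewrite -lam_mono !gK. Qed.

Lemma maximal_chain_map C : maximal_chain C -> maximal_chain (map lam C).
Proof.
case=> chainC maxC; split; first by rewrite /chain (mono_sorted lam_mono).
move=> t chain_t sub_t y ty; rewrite -[y]gK map_f //.
apply: (maxC (map g t)); last exact: map_f.
  by rewrite /chain (mono_sorted g_mono).
by move=> x xC; rewrite -[x]lamK map_f // sub_t ?map_f.
Qed.

Lemma increasing_on_automorphism C : maximal_chain C -> increasing_on theta C.
Proof.
move=> maxC; exists (map lam C); split; first exact: maximal_chain_map.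
split=> [|i j [[x y] lt_xy] /andP[lt_ij lt_jC] /= [x_eq y_eq]]; first exact: size_map.
by rewrite theta_lam !(nth_map x) -?x_eq -?y_eq //; apply: ltn_trans lt_jC.
Qed.

Lemma admissible_automorphism : admissible theta.
Proof.
move=> u0 s closed_s z.
have src p q : p < q ->
    [exists b : B X, ((val b).1 == z) && (val (theta b) == (p, q))] = (p == lam z).
  by move=> lt_pq;
    rewrite (existsB_relabel (fun pr => pr.1 == z) pairK pairKV theta_lam)
    /= ?(can2_eq gK lamK) ?g_mono.
have tgt p q : p < q ->
    [exists b : B X, ((val b).2 == z) && (val (theta b) == (p, q))] = (q == lam z).
  by move=> lt_pq;
    rewrite (existsB_relabel (fun pr => pr.2 == z) pairK pairKV theta_lam)
    /= ?(can2_eq gK lamK) ?g_mono.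
have -> : s_plus theta u0 s z = up_from u0 s (lam z).
  by apply: eq_count => i; apply: andb_id2l => /src.
have -> : s_minus theta u0 s z = down_to u0 s (lam z).
  by apply: eq_count => i; apply: andb_id2l => /src.
have -> : t_plus theta u0 s z = up_to u0 s (lam z).
  by apply: eq_count => i; apply: andb_id2l => /tgt.
have -> : t_minus theta u0 s z = down_from u0 s (lam z).
  by apply: eq_count => i; apply: andb_id2l => /tgt.
by have := closed_walk_balance (lam z) closed_s; lia.
Qed.

End Automorphism.

Section AntiAutomorphism.
Hypothesis lam_nmono : {mono lam : x y /~ x < y}.
Variable theta : B X -> B X.
Hypothesis theta_lam : forall b, val (theta b) = (lam (val b).2, lam (val b).1).

Let g_nmono : {mono g : x y /~ x < y}.
Proof. by move=> x y; rewrite -lam_nmono !gK. Qed.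

Lemma maximal_chain_rev_map C :
  maximal_chain C -> maximal_chain (rev (map lam C)).
Proof.
case=> chainC maxC; split; first by rewrite chain_rev_map.
move=> t chain_t sub_t y ty; rewrite mem_rev -[y]gK map_f //.
apply: (maxC (rev (map g t))); last by rewrite mem_rev map_f.
  by rewrite chain_rev_map.
by move=> x xC; rewrite mem_rev -[x]lamK map_f // sub_t // mem_rev map_f.
Qed.

Lemma decreasing_on_anti_automorphism C :
  maximal_chain C -> decreasing_on theta C.
Proof.
move=> maxC; exists (rev (map lam C)); split; first exact: maximal_chain_rev_map.
split=> [|i j [[x y] lt_xy] /andP[lt_ij lt_jC] /= [x_eq y_eq]].
  by rewrite size_rev size_map.
rewrite theta_lam !nth_rev size_map; try lia.
have [-> ->] : (size C - (size C - 1 - j).+1 = j) /\ (size C - (size C - 1 - i).+1 = i).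
  by lia.
by rewrite !(nth_map x) -?x_eq -?y_eq //; lia.
Qed.

Lemma admissible_anti_automorphism : admissible theta.
Proof.
move=> u0 s closed_s z.
have src p q : p < q ->
    [exists b : B X, ((val b).1 == z) && (val (theta b) == (p, q))] = (q == lam z).
  by move=> lt_pq;
    rewrite (existsB_relabel (fun pr => pr.1 == z) swapK swapKV theta_lam)
    /= ?(can2_eq gK lamK) ?g_nmono.
have tgt p q : p < q ->
    [exists b : B X, ((val b).2 == z) && (val (theta b) == (p, q))] = (p == lam z).
  by move=> lt_pq;
    rewrite (existsB_relabel (fun pr => pr.2 == z) swapK swapKV theta_lam)
    /= ?(can2_eq gK lamK) ?g_nmono.
have -> : s_plus theta u0 s z = up_to u0 s (lam z).
  by apply: eq_count => i; apply: andb_id2l => /src.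
have -> : s_minus theta u0 s z = down_from u0 s (lam z).
  by apply: eq_count => i; apply: andb_id2l => /src.
have -> : t_plus theta u0 s z = up_from u0 s (lam z).
  by apply: eq_count => i; apply: andb_id2l => /tgt.
have -> : t_minus theta u0 s z = down_to u0 s (lam z).
  by apply: eq_count => i; apply: andb_id2l => /tgt.
by have := closed_walk_balance (lam z) closed_s; lia.
Qed.

End AntiAutomorphism.
End Relabelling.

Theorem proposition2p5 (d : Order.disp_t) (X : finPOrderType d) :
  connected_poset X -> forall theta : B X -> B X, in_P theta -> in_AM theta.
Proof.
move=> _ theta [theta_bij [[lam [[[g lamK gK] lam_le] theta_lam]]
                         | [lam [[[g lamK gK] lam_le] theta_lam]]]].
- have lam_mono : {mono lam : x y / x < y}.
    by apply: leW_mono => x y; rewrite [RHS]lam_le.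
  split; last exact (admissible_automorphism lamK gK lam_mono theta_lam).
  split=> // C maxC; left.
  exact (increasing_on_automorphism lamK gK lam_mono theta_lam maxC).
- have lam_nmono : {mono lam : x y /~ x < y}.
    by apply: leW_nmono => x y; rewrite [RHS]lam_le.
  split; last exact (admissible_anti_automorphism lamK gK lam_nmono theta_lam).
  split=> // C maxC; right.
  exact (decreasing_on_anti_automorphism lamK gK lam_nmono theta_lam maxC).
Qed.
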